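(* Let $\Bbbk$ be a field, $\mathrm{Var}$ a variety of $\Bbbk$-algebras with one binary product defined by polylinear identities, $X$ a set, $\dot X$ a disjoint copy of $X$, $F=\mathrm{Var}\langle X\cup\dot X\rangle$, and $\varphi:F\to F$ the algebra homomorphism with $\varphi(x)=\varphi(\dot x)=x$ ($x\in X$). (1) Let $V\subseteq F$ be the span of all monomials of positive degree in $\dot X$, identified with $\text{tri-}\mathrm{Var}\langle X\rangle$ (operations $f\vdash g=\varphi(f)g$, $f\dashv g=f\varphi(g)$, $f\perp g=fg$, $\dot x\leftrightarrow x$). Let $S\subseteq V$ and $I=(S\cup\varphi(S))$ the ideal of $F$ generated by $S\cup\varphi(S)$. Then $I$ is $\varphi$-invariant, so $\varphi$ induces an endomorphism $\bar\varphi$ of $F/I$, and $F/I$ becomes a tri-algebra $(F/I)^{(3)}$ via $a\vdash b=\bar\varphi(a)b$, $a\dashv b=a\bar\varphi(b)$, $a\perp b=ab$; the tri-algebra $\text{tri-}\mathrm{Var}\langle X\mid S\rangle$ is isomorphic to the subalgebra of $(F/I)^{(3)}$ generated by the image of $\dot X$. (2) Similarly, let $V_2\subseteq F$ be the span of monomials of degree exactly $1$ in $\dot X$, identified with $\text{di-}\mathrm{Var}\langle X\rangle$ (operations $f\vdash g=\varphi(f)g$, $f\dashv g=f\varphi(g)$, $\dot x\leftrightarrow x$). For $S\subseteq V_2$ and $I=(S\cup\varphi(S))$, the di-algebra $\text{di-}\mathrm{Var}\langle X\mid S\rangle$ is isomorphic to the subalgebra of $F/I$ with operations $a\vdash b=\bar\varphi(a)b$,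 $a\dashv b=a\bar\varphi(b)$ generated by the image of $\dot X$.
   Context: Replication: for a polylinear $\Phi(x_1,\dots,x_n)$ in the free algebra with one binary operation $\mu$ and nonempty $H\subseteq\{1,\dots,n\}$, $\Phi_H$ is obtained by viewing each monomial as a binary tree, marking leaves $x_i$, $i\in H$, and replacing $\mu$ at each node by $\mu_S$, $S\subseteq\{1,2\}$ the set of branches containing a marked leaf (by $\mu_{\{1\}}$ if $S=\varnothing$). Write $\dashv=\mu_{\{1\}}$, $\vdash=\mu_{\{2\}}$, $\perp=\mu_{\{1,2\}}$. $\text{tri-}\mathrm{Var}$ is the variety of algebras with operations $\vdash,\dashv,\perp$ satisfying $(a* b)\vdash c=(a\star b)\vdash c$, $a\dashv(b* c)=a\dashv(b\star c)$ for all $*,\star\in\{\vdash,\dashv,\perp\}$, and $\Phi_H=0$ for every defining identity $\Phi$ of $\mathrm{Var}$ and nonempty $H$. $\text{di-}\mathrm{Var}$ is the variety of algebras with operations $\vdash,\dashv$ satisfying $(a\dashv b)\vdash c=(a\vdash b)\vdash c$, $a\dashv(b\vdash c)=a\dashv(b\dashv c)$, and $\Phi_{\{i\}}=0$ for every defining identity $\Phi$ of $\mathrm{Var}$ of degree $n$ and $1\le i\le n$. $\text{tri-}\mathrm{Var}\langle X\mid S\rangle$ (resp. $\text{di-}\mathrm{Var}\langle X\mid S\rangle$) denotes the quotient of the free tri- (resp. di-) algebra on $X$ by the ideal generated by $S$. The identifications of $V$ and $V_2$ with the free tri- and di-algebras on $X$ are established in the paper. *)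

From HB Require Import structures.
From mathcomp Require Import all_boot all_algebra.
Set Implicit Arguments. Unset Strict Implicit. Unset Printing Implicit Defensive.
Import GRing.Theory.
Local Open Scope ring_scope.

(* Binary trees = nonassociative monomials (bracketings) with leaves in L. *)
Inductive btree (L : Type) : Type :=
| BLeaf of L
| BNode of btree L & btree L.
Arguments BLeaf {L} _.
Arguments BNode {L} _ _.

Fixpoint leaves L (t : btree L) : seq L :=
  match t with BLeaf l => [:: l] | BNode t1 t2 => leaves t1 ++ leaves t2 end.

Fixpoint tev (A L : Type) (mul : A -> A -> A) (f : L -> A) (t : btree L) : A :=
  match t with BLeaf l => f l | BNode t1 t2 => mul (tev mul f t1) (tev mul f t2) end.

(* A (nonassociative) identity in variables x_0..x_{n-1}: a formal linear
   combination of monomials. *)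
Record pl_id (k : fieldType) := PlId {
  pl_n : nat;
  pl_terms : seq (k * btree 'I_pl_n) }.

Definition polylinear (k : fieldType) (Phi : pl_id k) : bool :=
  all (fun p => perm_eq (leaves p.2) (enum 'I_(pl_n Phi))) (pl_terms Phi).

Definition id_eval (k : fieldType) (A : lmodType k) (mul : A -> A -> A)
  (Phi : pl_id k) (a : 'I_(pl_n Phi) -> A) : A :=
  \sum_(p <- pl_terms Phi) p.1 *: tev mul a p.2.

Definition bilinear_mul (k : fieldType) (A : lmodType k) (mul : A -> A -> A) : Prop :=
  [/\ (forall a b c, mul (a + b) c = mul a c + mul b c),
      (forall a b c, mul a (b + c) = mul a b + mul a c),
      (forall (c : k) a b, mul (c *: a) b = c *: mul a b) &
      (forall (c : k) a b, mul a (c *: b) = c *: mul a b)].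

Definition in_var (k : fieldType) (J : Type) (Phi : J -> pl_id k)
  (A : lmodType k) (mul : A -> A -> A) : Prop :=
  forall j (a : 'I_(pl_n (Phi j)) -> A), @id_eval k A mul (Phi j) a = 0.

Definition is_lin (k : fieldType) (A B : lmodType k) (h : A -> B) : Prop :=
  forall (c : k) a b, h (c *: a + b) = c *: h a + h b.

Definition is_mult (k : fieldType) (A B : lmodType k) (mulA : A -> A -> A)
  (mulB : B -> B -> B) (h : A -> B) : Prop :=
  forall a b, h (mulA a b) = mulB (h a) (h b).

Definition is_free_var (k : fieldType) (J : Type) (Phi : J -> pl_id k)
  (Y : Type) (A : lmodType k) (mul : A -> A -> A) (gen : Y -> A) : Prop :=
  [/\ bilinear_mul mul, in_var Phi mul &
   forall (B : lmodType k) (mulB : B -> B -> B),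
     bilinear_mul mulB -> in_var Phi mulB ->
     forall f : Y -> B,
     exists h : A -> B,
       [/\ is_lin h, is_mult mul mulB h, (forall y, h (gen y) = f y) &
        forall h' : A -> B, is_lin h' -> is_mult mul mulB h' ->
          (forall y, h' (gen y) = f y) -> forall a, h' a = h a]].

Definition in_span (k : fieldType) (Y : Type) (A : lmodType k)
  (mul : A -> A -> A) (gen : Y -> A) (P : pred (btree Y)) (v : A) : Prop :=
  exists s : seq (k * btree Y),
    all (fun p => P p.2) s /\ v = \sum_(p <- s) p.1 *: tev mul gen p.2.

(* degree in the dotted variables (dotted copy = inr) *)
Definition dot_deg (X : Type) (t : btree (X + X)) : nat :=
  count (fun l : X + X => if l is inr _ then true else false) (leaves t).

Inductive op_ideal (k : fieldType) (A : lmodType k) (U : A -> Prop)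
  (Ops : (A -> A -> A) -> Prop) (G : A -> Prop) : A -> Prop :=
| oi_base a : G a -> op_ideal U Ops G a
| oi_zero : op_ideal U Ops G 0
| oi_add a b : op_ideal U Ops G a -> op_ideal U Ops G b -> op_ideal U Ops G (a + b)
| oi_scale (c : k) a : op_ideal U Ops G a -> op_ideal U Ops G (c *: a)
| oi_opl o a w : Ops o -> U a -> op_ideal U Ops G w -> op_ideal U Ops G (o a w)
| oi_opr o w a : Ops o -> op_ideal U Ops G w -> U a -> op_ideal U Ops G (o w a).

Definition ideal_gen (k : fieldType) (A : lmodType k) (mul : A -> A -> A)
  (G : A -> Prop) : A -> Prop :=
  op_ideal (fun _ => True) (fun o => o = mul) G.

Definition with_image (A : Type) (phi : A -> A) (S : A -> Prop) : A -> Prop :=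
  fun a => S a \/ exists s, S s /\ a = phi s.

Definition tri_ops (A : Type) (vd dl pp : A -> A -> A) : (A -> A -> A) -> Prop :=
  fun o => o = vd \/ o = dl \/ o = pp.

Definition di_ops (A : Type) (vd dl : A -> A -> A) : (A -> A -> A) -> Prop :=
  fun o => o = vd \/ o = dl.

(* Replication: evaluate a monomial where each node uses mu_S, S = set of
   branches containing a marked leaf (leaf i marked iff i \in H);
   mu_{1} = dl (-|), mu_{2} = vd (|-), mu_{1,2} = pp (perp), mu_{} = dl. *)
Fixpoint rep_ev (A : Type) (n : nat) (vd dl pp : A -> A -> A) (H : {set 'I_n})
  (a : 'I_n -> A) (t : btree 'I_n) : A * bool :=
  match t with
  | BLeaf i => (a i, i \in H)
  | BNode t1 t2 =>
      let: (x, m1) := rep_ev vd dl pp H a t1 in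
      let: (y, m2) := rep_ev vd dl pp H a t2 in
      ((if m1 && m2 then pp else if m2 then vd else dl) x y, m1 || m2)
  end.

Definition rep_eval (k : fieldType) (A : lmodType k) (vd dl pp : A -> A -> A)
  (Phi : pl_id k) (H : {set 'I_(pl_n Phi)}) (a : 'I_(pl_n Phi) -> A) : A :=
  \sum_(p <- pl_terms Phi) p.1 *: (rep_ev vd dl pp H a p.2).1.

Arguments id_eval {k A} mul Phi a.
Arguments rep_eval {k A} vd dl pp Phi H a.

From HB Require Import structures.
From mathcomp Require Import all_boot all_algebra.
From mathcomp Require Import boolp.
Set Implicit Arguments. Unset Strict Implicit. Unset Printing Implicit Defensive.
Import GRing.Theory.
Local Open Scope ring_scope.

(* Grade F by the number of dotted letters.  The homomorphism E from F to the
   dual numbers F[e]/(e^2) with x |-> x and x. |-> e x. reads off the parts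
   a_0, a_1 of dotted degree 0 and 1; it exists because a polylinear identity
   survives the passage to dual numbers (Leibniz rule).  As phi is an
   idempotent endomorphism, the ideal I is phi-stable, and the tri-axioms and
   the replicated identities already hold in F itself.  For I meeting V (resp.
   V2), induct on the generation of I: for i in I, both i - i_0 (resp. i_1) and
   a t with i_0 = phi t lie in the tri- (resp. di-) ideal generated by S.  The
   key point is that every a_0 is phi u with u of dotted degree 1 (dot the
   leftmost letter of each monomial), so that a product a w, expanded around
   a_0 and w_0, is a sum of |-, -| and perp products with factors in V. *)

Section Bilinear.
Variables (k : fieldType) (A : lmodType k) (m : A -> A -> A).
Hypothesis m_bil : bilinear_mul m.

Lemma bmulDl a b c : m (a + b) c = m a c + m b c. Proof. by case: m_bil. Qed.
Lemma bmulDr a b c : m a (b + c) = m a b + m a c. Proof. by case: m_bil. Qed.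
Lemma bmulZl (x : k) a b : m (x *: a) b = x *: m a b. Proof. by case: m_bil. Qed.
Lemma bmulZr (x : k) a b : m a (x *: b) = x *: m a b. Proof. by case: m_bil. Qed.
Lemma bmul0l b : m 0 b = 0. Proof. by rewrite -(scale0r (0 : A)) bmulZl !scale0r. Qed.
Lemma bmul0r a : m a 0 = 0. Proof. by rewrite -(scale0r (0 : A)) bmulZr !scale0r. Qed.
Lemma bmulBl a a' b : m (a - a') b = m a b - m a' b.
Proof. by rewrite bmulDl -scaleN1r bmulZl scaleN1r. Qed.
Lemma bmulBr a b b' : m a (b - b') = m a b - m a b'.
Proof. by rewrite bmulDr -scaleN1r bmulZr scaleN1r. Qed.

Lemma bmul_suml (I : Type) (r : seq I) (F : I -> A) b :
  m (\sum_(i <- r) F i) b = \sum_(i <- r) m (F i) b.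
Proof. exact: (big_morph (m^~ b) (fun x y => bmulDl x y b) (bmul0l b)). Qed.

Lemma bmul_sumr (I : Type) (r : seq I) (F : I -> A) a :
  m a (\sum_(i <- r) F i) = \sum_(i <- r) m a (F i).
Proof. exact: (big_morph (m a) (bmulDr a) (bmul0r a)). Qed.

Lemma bmul_sub_decomp a a' b b' :
  m a b - m a' b' = m a' (b - b') + m (a - a') b' + m (a - a') (b - b').
Proof. by rewrite !bmulBl !bmulBr [RHS]addrC addrA subrK -addrA addKr. Qed.

End Bilinear.

Section Linear.
Variables (k : fieldType) (A B : lmodType k) (h : A -> B).
Hypothesis h_lin : is_lin h.

Lemma linD a b : h (a + b) = h a + h b. Proof. by have := h_lin 1 a b; rewrite !scale1r. Qed.
Lemma lin0 : h 0 = 0. Proof. by apply: (@addrI _ (h 0)); rewrite -linD !addr0. Qed.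
Lemma linZ c a : h (c *: a) = c *: h a.
Proof. by have := h_lin c a 0; rewrite addr0 lin0 addr0. Qed.
Lemma lin_sum (I : Type) (r : seq I) (F : I -> A) :
  h (\sum_(i <- r) F i) = \sum_(i <- r) h (F i).
Proof. exact: (big_morph h linD lin0). Qed.

End Linear.

Lemma lin_comp (k : fieldType) (A B C : lmodType k) (g : B -> C) (h : A -> B) :
  is_lin g -> is_lin h -> is_lin (g \o h).
Proof. by move=> g_lin h_lin c a b /=; rewrite h_lin g_lin. Qed.

Lemma mult_comp (k : fieldType) (A B C : lmodType k) (mA : A -> A -> A)
    (mB : B -> B -> B) (mC : C -> C -> C) (g : B -> C) (h : A -> B) :
  is_mult mB mC g -> is_mult mA mB h -> is_mult mA mC (g \o h).
Proof. by move=> g_mult h_mult a b /=; rewrite h_mult g_mult. Qed.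

Lemma mult_tev (k : fieldType) (A B : lmodType k) (mA : A -> A -> A)
    (mB : B -> B -> B) (h : A -> B) (L : Type) (g : L -> A) (t : btree L) :
  is_mult mA mB h -> h (tev mA g t) = tev mB (h \o g) t.
Proof. by move=> h_mult; elim: t => [l|t1 IH1 t2 IH2] //=; rewrite h_mult IH1 IH2. Qed.

Lemma eq_tev (A : Type) (L : eqType) (m : A -> A -> A) (f g : L -> A) (t : btree L) :
  {in leaves t, f =1 g} -> tev m f t = tev m g t.
Proof.
elim: t => [l|t1 IH1 t2 IH2] /= fg; first by apply: fg; rewrite inE.
by rewrite IH1 ?IH2 // => l tl; apply: fg; rewrite mem_cat tl ?orbT.
Qed.

Lemma eq_big_all (I : Type) (V : zmodType) (P : pred I) (s : seq I) (F1 F2 : I -> V) :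
  all P s -> (forall i, P i -> F1 i = F2 i) -> \sum_(i <- s) F1 i = \sum_(i <- s) F2 i.
Proof.
move=> Ps F12; elim: s Ps => [|i s IH] /=; first by rewrite !big_nil.
by case/andP=> Pi Ps; rewrite !big_cons F12 // IH.
Qed.

Section OpIdeal.
Variables (k : fieldType) (A : lmodType k).

Lemma op_ideal_sub (U U' : A -> Prop) (Ops Ops' : (A -> A -> A) -> Prop) (G G' : A -> Prop) :
  (forall g, G g -> op_ideal U' Ops' G' g) ->
  (forall o a w, Ops o -> U a -> op_ideal U' Ops' G' w ->
     op_ideal U' Ops' G' (o a w) /\ op_ideal U' Ops' G' (o w a)) ->
  forall v, op_ideal U Ops G v -> op_ideal U' Ops' G' v.
Proof.
move=> GG' closed v; elim=> {v} [g /GG' //|||||].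
- exact: oi_zero.
- by move=> a b _ Ia _ Ib; apply: oi_add.
- by move=> c a _ Ia; apply: oi_scale.
- by move=> o a w Oo Ua _ Iw; case: (closed o a w Oo Ua Iw).
- by move=> o w a Oo _ Iw Ua; case: (closed o a w Oo Ua Iw).
Qed.

End OpIdeal.
Definition vdash_by (A : Type) (mul : A -> A -> A) (phi : A -> A) (f g : A) : A :=
  mul (phi f) g.
Definition dashv_by (A : Type) (mul : A -> A -> A) (phi : A -> A) (f g : A) : A :=
  mul f (phi g).

Section IdempotentEndomorphism.
Variables (k : fieldType) (A : lmodType k) (mul : A -> A -> A) (phi : A -> A).
Hypotheses (phi_lin : is_lin phi) (phi_mult : is_mult mul mul phi)
  (phi_idem : forall a, phi (phi a) = phi a).
Local Notation vdash := (vdash_by mul phi).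
Local Notation dashv := (dashv_by mul phi).

Lemma phi_tri_op o a b : tri_ops vdash dashv mul o -> phi (o a b) = mul (phi a) (phi b).
Proof. by case=> [|[|]] ->; rewrite /vdash_by /dashv_by phi_mult ?phi_idem. Qed.

Section Ideal.
Variable G : A -> Prop.
Local Notation I := (ideal_gen mul (with_image phi G)).

Lemma ideal_with_image_phi a : I a -> I (phi a).
Proof.
elim=> {a} [a [Ga|[g [Gg ->]]]||a b _ Ia _ Ib|c a _ Ia|o a w -> _ _ Iw|o w a -> _ Iw _].
- by apply: oi_base; right; exists a.
- by apply: oi_base; right; exists g; rewrite phi_idem.
- by rewrite (lin0 phi_lin); apply: oi_zero.
- by rewrite (linD phi_lin); apply: oi_add.
- by rewrite (linZ phi_lin); apply: oi_scale.
- by rewrite phi_mult; apply: oi_opl.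
- by rewrite phi_mult; apply: oi_opr.
Qed.

Lemma ideal_tri_op o a w : tri_ops vdash dashv mul o -> I w -> I (o a w) /\ I (o w a).
Proof.
move=> tri_o Iw; have Iphiw := ideal_with_image_phi Iw.
by case: tri_o => [|[|]] ->; rewrite /vdash_by /dashv_by; (split; [apply: oi_opl | apply: oi_opr]).
Qed.

Lemma ideal_tri_axioms o1 o2 :
  tri_ops vdash dashv mul o1 -> tri_ops vdash dashv mul o2 ->
  forall a b c, I (vdash (o1 a b) c - vdash (o2 a b) c) /\
                I (dashv a (o1 b c) - dashv a (o2 b c)).
Proof.
move=> o1_tri o2_tri a b c.
by rewrite /vdash_by /dashv_by !phi_tri_op // !subrr; split; apply: oi_zero.
Qed.

End Ideal.

(* An unmarked subtree is evaluated with [dashv] alone, so the arguments [b i]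
   only determine its image under [phi]. *)
Lemma rep_ev_spec n (H : {set 'I_n}) (a : 'I_n -> A) t :
  let b i := if i \in H then a i else phi (a i) in
  let r := rep_ev vdash dashv mul H a t in
  r.2 = has (mem H) (leaves t) /\ (if r.2 then r.1 else phi r.1) = tev mul b t.
Proof.
move=> b; elim: t => [i|t1 IH1 t2 IH2] /=; first by rewrite orbF /b; case: (i \in H).
move: IH1 IH2; case: (rep_ev _ _ _ H a t1) => x m1; case: (rep_ev _ _ _ H a t2) => y m2.
move=> /= [-> e1] [-> e2]; rewrite has_cat; split=> //.
move: e1 e2; case: (has _ (leaves t1)); case: (has _ (leaves t2)) => /= <- <- //.
by rewrite /dashv_by phi_mult phi_idem.
Qed.

Lemma rep_eval_eq0 (J : Type) (Phi : J -> pl_id k) j (H : {set 'I_(pl_n (Phi j))}) a :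
  in_var Phi mul -> polylinear (Phi j) -> H != set0 ->
  rep_eval vdash dashv mul (Phi j) H a = 0.
Proof.
move=> mul_var Phi_pl /set0Pn [i0 Hi0].
rewrite /rep_eval -[RHS](mul_var j (fun i => if i \in H then a i else phi (a i))).
apply: (eq_big_all Phi_pl) => p /= p_pl; congr (_ *: _).
have [marked val] := rep_ev_spec H a p.2.
have marked_leaf : has (mem H) (leaves p.2).
  by apply/hasP; exists i0; rewrite ?(perm_mem p_pl) ?mem_enum.
by move: val; rewrite marked marked_leaf.
Qed.

End IdempotentEndomorphism.
Section FreeAlgebra.
Variables (k : fieldType) (J : Type) (Phi : J -> pl_id k)
  (L : Type) (F : lmodType k) (mul : F -> F -> F) (gen : L -> F).
Hypothesis free : is_free_var Phi mul gen.

Lemma free_bilinear : bilinear_mul mul. Proof. by case: free. Qed.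
Lemma free_var : in_var Phi mul. Proof. by case: free. Qed.

Lemma free_hom_eq (B : lmodType k) (mB : B -> B -> B) (h1 h2 : F -> B) :
  bilinear_mul mB -> in_var Phi mB ->
  is_lin h1 -> is_mult mul mB h1 -> is_lin h2 -> is_mult mul mB h2 ->
  (forall y, h1 (gen y) = h2 (gen y)) -> h1 =1 h2.
Proof.
move=> mB_bil mB_var h1_lin h1_mult h2_lin h2_mult h12 a; case: free => _ _ univ.
have [h [_ _ _ h_uniq]] := univ B mB mB_bil mB_var (h1 \o gen).
by rewrite (h_uniq h1) // (h_uniq h2) // => y; rewrite /= h12.
Qed.

Definition monomial_span : {pred F} := fun v => `[< in_span mul gen predT v >].

Lemma monomial_span_submod_closed : submod_closed monomial_span.
Proof.
split; first by apply/asboolP; exists [::]; rewrite big_nil.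
move=> c u v /asboolP[s [_ ->]] /asboolP[t [_ ->]]; apply/asboolP.
exists ([seq (c * p.1, p.2) | p <- s] ++ t); split; first exact: all_predT.
by rewrite big_cat big_map scaler_sumr; congr (_ + _); apply: eq_bigr => p _; rewrite scalerA.
Qed.

HB.instance Definition _ :=
  GRing.isSubmodClosed.Build k F monomial_span monomial_span_submod_closed.

Record span_sub := SpanSub { span_val : F; _ : span_val \in monomial_span }.
HB.instance Definition _ := [isSub for span_val].
HB.instance Definition _ := [Choice of span_sub by <:].
HB.instance Definition _ := [SubChoice_isSubLmodule of span_sub by <:].

Lemma monomial_spanM : {in monomial_span &, forall a b, mul a b \in monomial_span}.
Proof.
move=> _ _ /asboolP[s [_ ->]] /asboolP[t [_ ->]]; apply/asboolP.
exists [seq (p.1 * q.1, BNode p.2 q.2) | p <- s, q <- t]; split; first exact: all_predT.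
rewrite big_allpairs_dep (bmul_suml free_bilinear); apply: eq_bigr => p _.
rewrite (bmul_sumr free_bilinear); apply: eq_bigr => q _.
by rewrite (bmulZl free_bilinear) (bmulZr free_bilinear) scalerA.
Qed.

Definition span_mul (u v : span_sub) : span_sub := SpanSub (monomial_spanM (valP u) (valP v)).

Lemma span_mul_bilinear : bilinear_mul span_mul.
Proof.
have [mulDl mulDr mulZl mulZr] := free_bilinear.
by split=> *; apply: val_inj; rewrite /= ?mulDl ?mulDr ?mulZl ?mulZr.
Qed.

Lemma span_val_lin : is_lin span_val. Proof. by []. Qed.
Lemma span_val_mult : is_mult span_mul mul span_val. Proof. by []. Qed.

Lemma span_mul_var : in_var Phi span_mul.
Proof.
move=> j a; apply: val_inj => /=; rewrite /id_eval (lin_sum span_val_lin).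
rewrite -[RHS](@free_var j (span_val \o a)); apply: eq_bigr => p _.
by rewrite /= (mult_tev _ _ span_val_mult).
Qed.

(* Every element of the free algebra is a linear combination of monomials: the
   homomorphism into the subalgebra [span_sub] is a section of [span_val]. *)
Lemma free_spanned a : in_span mul gen predT a.
Proof.
have gen_span y : gen y \in monomial_span.
  by apply/asboolP; exists [:: (1, BLeaf y)]; rewrite big_seq1 scale1r.
case: free => _ _ univ.
have [h [h_lin h_mult h_gen _]] :=
  univ _ span_mul span_mul_bilinear span_mul_var (fun y => SpanSub (gen_span y)).
have -> : a = span_val (h a).
  apply: (free_hom_eq (h1 := id) (h2 := span_val \o h) free_bilinear free_var)
    => // [c u v|u v|y].
  - by rewrite /= h_lin.
  - by rewrite /= h_mult.
  - by rewrite /= h_gen.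
exact/asboolP/(valP (h a)).
Qed.

End FreeAlgebra.

Section DualNumbers.
Variables (k : fieldType) (J : Type) (Phi : J -> pl_id k)
  (A : lmodType k) (m : A -> A -> A).
Hypotheses (m_bil : bilinear_mul m) (m_var : in_var Phi m)
  (Phi_pl : forall j, polylinear (Phi j)).

(* the product of A[e]/(e^2), written on pairs (a, b) = a + e b *)
Definition dual_mul (p q : A * A) : A * A := (m p.1 q.1, m p.1 q.2 + m p.2 q.1).

Lemma dual_mul_bilinear : bilinear_mul dual_mul.
Proof.
have [mulDl mulDr mulZl mulZr] := m_bil.
split=> x y z; rewrite /dual_mul /=; congr pair;
  by rewrite ?mulDl ?mulDr ?mulZl ?mulZr ?scalerDr // addrACA.
Qed.

Lemma tev_dual_fst (L : Type) (a : L -> A * A) t :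
  (tev dual_mul a t).1 = tev m (fun l => (a l).1) t.
Proof. by elim: t => [l|t1 IH1 t2 IH2] //=; rewrite IH1 IH2. Qed.

Definition dual_at (L : eqType) (a : L -> A * A) (i l : L) : A :=
  if l == i then (a l).2 else (a l).1.

Lemma tev_dual_snd (L : eqType) (a : L -> A * A) t : uniq (leaves t) ->
  (tev dual_mul a t).2 = \sum_(i <- leaves t) tev m (dual_at a i) t.
Proof.
elim: t => [l|t1 IH1 t2 IH2] /=; first by rewrite big_seq1 /dual_at eqxx.
rewrite cat_uniq => /and3P[uniq1 /hasPn disj uniq2].
rewrite big_cat /= !tev_dual_fst IH1 // IH2 // addrC (bmul_suml m_bil) (bmul_sumr m_bil).
have dual_at_out i l : l != i -> dual_at a i l = (a l).1 by rewrite /dual_at => /negPf->.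
congr (_ + _); apply: eq_big_seq => i i_t; congr m; apply: eq_tev => l l_t.
- by rewrite dual_at_out //; apply: contraNneq (disj i i_t) => <-.
- by rewrite [RHS]dual_at_out //; apply: contraNneq (disj l l_t) => ->.
Qed.

Lemma dual_mul_var : in_var Phi dual_mul.
Proof.
move=> j a; rewrite /id_eval [LHS]surjective_pairing.
rewrite (big_morph (@fst A A) (id2 := 0) (op2 := +%R) (fun _ _ => erefl) erefl).
rewrite (big_morph (@snd A A) (id2 := 0) (op2 := +%R) (fun _ _ => erefl) erefl) /=.
congr pair.
  rewrite -[RHS](@m_var j (fun l => (a l).1)); apply: eq_bigr => p _.
  by rewrite tev_dual_fst.
rewrite (eq_big_all (Phi_pl j) (F2 := fun p =>
  \sum_(i <- enum 'I_(pl_n (Phi j))) p.1 *: tev m (dual_at a i) p.2)).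
  by rewrite exchange_big big1 // => i _; apply: m_var.
move=> p p_pl /=; rewrite tev_dual_snd; last by rewrite (perm_uniq p_pl) enum_uniq.
by rewrite (perm_big _ p_pl) scaler_sumr.
Qed.

End DualNumbers.

Section DottedCopy.
Variables (k : fieldType) (J : Type) (Phi : J -> pl_id k) (X : Type)
  (F : lmodType k) (mul : F -> F -> F) (gen : X + X -> F).

Definition dot_split (y : X + X) : F * F :=
  if y is inr _ then (0, gen y) else (gen y, 0).

Variables (phi : F -> F) (E : F -> F * F).
Hypotheses (Phi_pl : forall j, polylinear (Phi j)) (free : is_free_var Phi mul gen)
  (phi_lin : is_lin phi) (phi_mult : is_mult mul mul phi)
  (phi_undotted : forall x, phi (gen (inl x)) = gen (inl x))
  (phi_dotted : forall x, phi (gen (inr x)) = gen (inl x)).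
(* [E] maps a monomial of dotted degree d to e^d times itself, with e^2 = 0, so
   the two components of [E a] are the parts of [a] of dotted degree 0 and 1. *)
Hypotheses (E_lin : is_lin E) (E_mult : is_mult mul (dual_mul mul) E)
  (E_gen : forall y, E (gen y) = dot_split y).

Local Notation deg0 a := (E a).1.
Local Notation deg1 a := (E a).2.
Local Notation V := (in_span mul gen (fun t => 0 < dot_deg t)%N).
Local Notation V2 := (in_span mul gen (fun t => dot_deg t == 1)%N).
Local Notation vdash := (vdash_by mul phi).
Local Notation dashv := (dashv_by mul phi).

Let mul_bil := free_bilinear free.
Let mul_var := free_var free.

Lemma deg0_lin : is_lin (fun a => deg0 a). Proof. by move=> c a b; rewrite E_lin. Qed.
Lemma deg1_lin : is_lin (fun a => deg1 a). Proof. by move=> c a b; rewrite E_lin. Qed.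
Lemma deg0_mult : is_mult mul mul (fun a => deg0 a). Proof. by move=> a b; rewrite E_mult. Qed.
Lemma deg1_mul a b : deg1 (mul a b) = mul (deg0 a) (deg1 b) + mul (deg1 a) (deg0 b).
Proof. by rewrite E_mult. Qed.

Lemma phi_idem a : phi (phi a) = phi a.
Proof.
apply: (free_hom_eq free mul_bil mul_var (h1 := phi \o phi)) => //;
  [exact: lin_comp | exact: mult_comp | by case=> x /=; rewrite ?phi_undotted ?phi_dotted].
Qed.

Lemma E_phi a : E (phi a) = (phi a, 0).
Proof.
apply: (free_hom_eq free (dual_mul_bilinear mul_bil) (dual_mul_var mul_bil mul_var Phi_pl)
  (h1 := E \o phi) (h2 := fun a => (phi a, 0))) => //.
- exact: lin_comp.
- exact: mult_comp.
- by move=> c u v; apply: injective_projections; rewrite /= ?phi_lin ?scaler0 ?addr0.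
- by move=> u v; rewrite /= phi_mult /dual_mul /= (bmul0r mul_bil) (bmul0l mul_bil) addr0.
- by case=> x /=; rewrite ?phi_undotted ?phi_dotted E_gen.
Qed.

Lemma phi_deg0 a : phi (deg0 a) = deg0 a.
Proof.
apply: (free_hom_eq free mul_bil mul_var
  (h1 := phi \o (fun a => deg0 a)) (h2 := fun a => deg0 a)) => //.
- exact/lin_comp/deg0_lin.
- exact/mult_comp/deg0_mult.
- exact: deg0_lin.
- exact: deg0_mult.
- by case=> x /=; rewrite E_gen /= ?phi_undotted // (lin0 phi_lin).
Qed.

Lemma dot_deg_node (t1 t2 : btree (X + X)) :
  dot_deg (BNode t1 t2) = (dot_deg t1 + dot_deg t2)%N.
Proof. by rewrite /dot_deg /= count_cat. Qed.

Lemma E_tev t : E (tev mul gen t) =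
  (if dot_deg t == 0%N then tev mul gen t else 0,
   if dot_deg t == 1%N then tev mul gen t else 0).
Proof.
rewrite (mult_tev _ _ E_mult); elim: t => [y|t1 IH1 t2 IH2] /=; first by rewrite E_gen; case: y.
rewrite IH1 IH2 dot_deg_node /dual_mul /=.
case: (dot_deg t1) => [|[|d1]]; case: (dot_deg t2) => [|[|d2]] /=;
  by rewrite ?(bmul0l mul_bil) ?(bmul0r mul_bil) ?addr0 ?add0r ?addn0 ?addnS.
Qed.

Lemma deg0_V v : V v -> deg0 v = 0.
Proof.
move=> [s [s_dotted ->]]; rewrite (lin_sum deg0_lin).
rewrite (eq_big_all (F2 := fun=> 0) s_dotted) ?big1 // => p /= deg_pos.
by rewrite (linZ deg0_lin) E_tev; case: (dot_deg p.2) deg_pos => // d _; rewrite scaler0.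
Qed.

Lemma deg1_V2 v : V2 v -> deg1 v = v.
Proof.
move=> [s [s_dot1 ->]]; rewrite (lin_sum deg1_lin); apply: (eq_big_all s_dot1) => p /= deg1.
by rewrite (linZ deg1_lin) E_tev deg1.
Qed.

Lemma V2_V v : V2 v -> V v.
Proof. by move=> [s [s_dot1 ->]]; exists s; split=> //; apply: sub_all s_dot1 => p /eqP ->. Qed.

Lemma V_sub_deg0 a : V (a - deg0 a).
Proof.
have [s [_ ->]] := free_spanned free a.
exists [seq p <- s | 0 < dot_deg p.2]%N; split; first exact: filter_all.
rewrite big_filter (lin_sum deg0_lin) -sumrB [RHS]big_mkcond; apply: eq_bigr => p _.
by rewrite (linZ deg0_lin) E_tev; case: (dot_deg p.2) => [|d]; rewrite ?subrr ?scaler0 ?subr0.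
Qed.

Lemma V2_deg1 a : V2 (deg1 a).
Proof.
have [s [_ ->]] := free_spanned free a.
exists [seq p <- s | dot_deg p.2 == 1]%N; split; first exact: filter_all.
rewrite big_filter (lin_sum deg1_lin) [RHS]big_mkcond; apply: eq_bigr => p _.
by rewrite (linZ deg1_lin) E_tev /=; case: ifP; rewrite ?scaler0.
Qed.

Definition untag (y : X + X) : X := match y with inl x | inr x => x end.

Fixpoint undot (t : btree (X + X)) : btree (X + X) :=
  match t with
  | BLeaf y => BLeaf (inl (untag y))
  | BNode t1 t2 => BNode (undot t1) (undot t2)
  end.

Fixpoint dot_first (t : btree (X + X)) : btree (X + X) :=
  match t with
  | BLeaf y => BLeaf (inr (untag y))
  | BNode t1 t2 => BNode (dot_first t1) (undot t2)
  end.

Lemma dot_deg_undot t : dot_deg (undot t) = 0%N.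
Proof. by elim: t => [//|t1 IH1 t2 IH2]; rewrite /= dot_deg_node IH1 IH2. Qed.

Lemma dot_deg_dot_first t : dot_deg (dot_first t) = 1%N.
Proof. by elim: t => [//|t1 IH1 t2 _]; rewrite /= dot_deg_node IH1 dot_deg_undot. Qed.

Lemma phi_tev_undot t : phi (tev mul gen (undot t)) = phi (tev mul gen t).
Proof.
elim: t => [[x|x]|t1 IH1 t2 IH2] /=; rewrite ?phi_undotted ?phi_dotted //.
by rewrite !phi_mult IH1 IH2.
Qed.

Lemma phi_tev_dot_first t : phi (tev mul gen (dot_first t)) = phi (tev mul gen t).
Proof.
elim: t => [[x|x]|t1 IH1 t2 _] /=; rewrite ?phi_undotted ?phi_dotted //.
by rewrite !phi_mult IH1 phi_tev_undot.
Qed.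

Lemma deg0_phi_V2 a : exists2 u, V2 u & phi u = deg0 a.
Proof.
have [s [_ s_deg0]] := free_spanned free (deg0 a).
exists (\sum_(p <- s) p.1 *: tev mul gen (dot_first p.2)).
  exists [seq (p.1, dot_first p.2) | p <- s]; rewrite big_map; split=> //.
  by rewrite all_map; apply: sub_all (all_predT s) => p _; rewrite /= dot_deg_dot_first.
rewrite -[RHS]phi_deg0 s_deg0 !(lin_sum phi_lin); apply: eq_bigr => p _.
by rewrite !(linZ phi_lin) phi_tev_dot_first.
Qed.

Section Ideals.
Variable S : F -> Prop.
Local Notation I := (ideal_gen mul (with_image phi S)).
Local Notation T := (op_ideal V (tri_ops vdash dashv mul) S).
Local Notation T2 := (op_ideal V2 (di_ops vdash dashv) S).

Lemma T2_sub_T v : T2 v -> T v.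
Proof.
apply: op_ideal_sub => [g Sg|o a w Oo V2a Tw]; first exact: oi_base.
have Va := V2_V V2a.
have tri_o : tri_ops vdash dashv mul o by case: Oo => ->; [left | right; left].
by split; [apply: oi_opl | apply: oi_opr].
Qed.

Lemma T_sub_I v : T v -> I v.
Proof.
apply: op_ideal_sub => [g Sg|o a w tri_o _ Iw]; first by apply: oi_base; left.
exact: (ideal_tri_op phi_lin phi_mult phi_idem).
Qed.

Section DottedGenerators.
Hypothesis S_V : forall s, S s -> V s.

Lemma deg0_ideal i : I i -> exists2 t, T2 t & deg0 i = phi t.
Proof.
elim=> {i} [a [Sa|[s [Ss ->]]]||a b _ [t1 T2t1 e1] _ [t2 T2t2 e2]|c a _ [t T2t e]|
            o a w -> _ _ [t T2t e]|o w a -> _ [t T2t e] _].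
- by exists 0; [exact: oi_zero | rewrite deg0_V ?(lin0 phi_lin) //; exact: S_V].
- by exists s; [exact: oi_base | rewrite E_phi].
- by exists 0; rewrite ?(lin0 E_lin) ?(lin0 phi_lin) //; exact: oi_zero.
- by exists (t1 + t2); [exact: oi_add | rewrite (linD deg0_lin) (linD phi_lin) e1 e2].
- by exists (c *: t); [exact: oi_scale | rewrite (linZ deg0_lin) (linZ phi_lin) e].
- have [u V2u phi_u] := deg0_phi_V2 a.
  exists (dashv u t); first by apply: oi_opl => //; right.
  by rewrite deg0_mult /dashv_by phi_mult phi_idem phi_u e.
- have [u V2u phi_u] := deg0_phi_V2 a.
  exists (vdash t u); first by apply: oi_opr => //; left.
  by rewrite deg0_mult /vdash_by phi_mult phi_idem phi_u e.
Qed.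

Lemma ideal_sub_deg0 i : I i -> T (i - deg0 i).
Proof.
elim=> {i} [a [Sa|[s [Ss ->]]]||a b _ Ta _ Tb|c a _ Ta|o a w -> _ Iw Tw|o w a -> Iw Tw _].
- by rewrite deg0_V ?subr0; [apply: oi_base | exact: S_V].
- by rewrite E_phi subrr; apply: oi_zero.
- by rewrite (lin0 deg0_lin) subr0; apply: oi_zero.
- by rewrite (linD deg0_lin) opprD addrACA; apply: oi_add.
- by rewrite (linZ deg0_lin) -scalerBr; apply: oi_scale.
- have [u V2u phi_u] := deg0_phi_V2 a; have [t T2t phi_t] := deg0_ideal Iw.
  rewrite deg0_mult (bmul_sub_decomp mul_bil) -{1}phi_u {2}phi_t.
  apply: oi_add; first apply: oi_add.
  + by apply: (oi_opl (o := vdash)) => //; [left | exact: V2_V].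
  + by apply: (oi_opl (o := dashv)) => //; [right; left | exact: V_sub_deg0 | exact: T2_sub_T].
  + by apply: oi_opl => //; [right; right | exact: V_sub_deg0].
- have [u V2u phi_u] := deg0_phi_V2 a; have [t T2t phi_t] := deg0_ideal Iw.
  rewrite deg0_mult (bmul_sub_decomp mul_bil) -{2}phi_u {1}phi_t.
  apply: oi_add; first apply: oi_add.
  + by apply: (oi_opr (o := vdash)) => //; [left | exact: T2_sub_T | exact: V_sub_deg0].
  + by apply: (oi_opr (o := dashv)) => //; [right; left | exact: V2_V].
  + by apply: oi_opr => //; [right; right | exact: V_sub_deg0].
Qed.

Lemma ideal_meet_V v : V v -> (I v <-> T v).
Proof.
move=> Vv; split; last exact: T_sub_I.
by move/ideal_sub_deg0; rewrite deg0_V // subr0.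
Qed.

End DottedGenerators.

Section LinearGenerators.
Hypothesis S_V2 : forall s, S s -> V2 s.

Lemma ideal_deg1 i : I i -> T2 (deg1 i).
Proof.
have S_V s : S s -> V s by move/S_V2/V2_V.
elim=> {i} [a [Sa|[s [Ss ->]]]||a b _ Ta _ Tb|c a _ Ta|o a w -> _ Iw Tw|o w a -> Iw Tw _].
- by rewrite deg1_V2; [apply: oi_base | exact: S_V2].
- by rewrite E_phi; apply: oi_zero.
- by rewrite (lin0 deg1_lin); apply: oi_zero.
- by rewrite (linD deg1_lin); apply: oi_add.
- by rewrite (linZ deg1_lin); apply: oi_scale.
- have [u V2u phi_u] := deg0_phi_V2 a; have [t T2t phi_t] := deg0_ideal S_V Iw.
  rewrite deg1_mul -phi_u phi_t; apply: oi_add.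
  + by apply: (oi_opl (o := vdash)) => //; left.
  + by apply: (oi_opl (o := dashv)) => //; [right | exact: V2_deg1].
- have [u V2u phi_u] := deg0_phi_V2 a; have [t T2t phi_t] := deg0_ideal S_V Iw.
  rewrite deg1_mul -phi_u phi_t; apply: oi_add.
  + by apply: (oi_opr (o := vdash)) => //; [left | exact: V2_deg1].
  + by apply: (oi_opr (o := dashv)) => //; right.
Qed.

Lemma ideal_meet_V2 v : V2 v -> (I v <-> T2 v).
Proof.
move=> V2v; split; last by move/T2_sub_T/T_sub_I.
by move/ideal_deg1; rewrite deg1_V2.
Qed.

End LinearGenerators.

End Ideals.

End DottedCopy.

Theorem corollary4p3 (k : fieldType) (J : Type) (Phi : J -> pl_id k)
  (X : Type) (F : lmodType k) (mul : F -> F -> F) (gen : X + X -> F)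
  (phi : F -> F) :
  (forall j, polylinear (Phi j)) ->
  is_free_var Phi mul gen ->
  is_lin phi -> is_mult mul mul phi ->
  (forall x, phi (gen (inl x)) = gen (inl x)) ->
  (forall x, phi (gen (inr x)) = gen (inl x)) ->
  let vdash := fun f g => mul (phi f) g in
  let dashv := fun f g => mul f (phi g) in
  let V := in_span mul gen (fun t => 0 < dot_deg t)%N in
  let V2 := in_span mul gen (fun t => dot_deg t == 1)%N in
  (forall S : F -> Prop, (forall s, S s -> V s) ->
     let I := ideal_gen mul (with_image phi S) in
     [/\ (forall a, I a -> I (phi a)),
         (forall o1 o2, tri_ops vdash dashv mul o1 -> tri_ops vdash dashv mul o2 ->
            forall a b c, I (vdash (o1 a b) c - vdash (o2 a b) c) /\
                          I (dashv a (o1 b c) - dashv a (o2 b c))),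
         (forall j (H : {set 'I_(pl_n (Phi j))}), H != set0 ->
            forall a, I (rep_eval vdash dashv mul (Phi j) H a)) &
         (forall v, V v -> (I v <-> op_ideal V (tri_ops vdash dashv mul) S v))])
  /\
  (forall S : F -> Prop, (forall s, S s -> V2 s) ->
     let I := ideal_gen mul (with_image phi S) in
     (forall a, I a -> I (phi a)) /\
     (forall v, V2 v -> (I v <-> op_ideal V2 (di_ops vdash dashv) S v))).
Proof.
move=> Phi_pl free phi_lin phi_mult phi_undotted phi_dotted vdash dashv V V2.
have mul_bil := free_bilinear free; have mul_var := free_var free.
have phi_idem := phi_idem free phi_lin phi_mult phi_undotted phi_dotted.
have [_ _ univ] := free.
have [E [E_lin E_mult E_gen _]] := univ _ _ (dual_mul_bilinear mul_bil)
  (dual_mul_var mul_bil mul_var Phi_pl) (dot_split gen).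
split=> S S_V I.
  split.
  - exact: ideal_with_image_phi.
  - exact: ideal_tri_axioms.
  - by move=> j H H_nz a; rewrite rep_eval_eq0 //; exact: oi_zero.
  - exact: (ideal_meet_V Phi_pl free phi_lin phi_mult phi_undotted phi_dotted
      E_lin E_mult E_gen).
split; first exact: ideal_with_image_phi.
exact: (ideal_meet_V2 Phi_pl free phi_lin phi_mult phi_undotted phi_dotted
  E_lin E_mult E_gen).
Qed.
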